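(* For $A\in\mathbb{R}$ and $x\in\mathbb{R}$ define $E_0(A,x):=1$, $E_1(A,x):=e^{(1-x)A}$ and, for $n\ge2$, \[ E_n(A,x):=\begin{cases} \exp\!\Big(\big[x(E_1+E_3+\cdots+E_{n-1})-\tfrac n2\big]A\Big), & n \text{ even},\\[4pt] \exp\!\Big(\big[\tfrac{n+1}{2}-x(E_0+E_2+\cdots+E_{n-1})\big]A\Big), & n\text{ odd},\end{cases} \] where all $E_j$ are evaluated at $(A,x)$. Define $\varphi_1(A,x):=x-1$ and $\varphi_n(A,x):=\varphi_{n-1}(A,x)-1+xE_{n-1}(A,x)$ for $n\ge2$, and $p_n(A):=\frac{\partial\varphi_n}{\partial x}(A,1)$. Then for every $n\ge1$, $p_n$ is a polynomial in $A$ with integer coefficients, i.e. $p_n\in\mathbb{Z}[A]$. *)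

From HB Require Import structures.
From mathcomp Require Import all_boot all_order all_algebra.
From mathcomp Require Import all_classical all_reals all_analysis.
Set Implicit Arguments. Unset Strict Implicit. Unset Printing Implicit Defensive.
Import Order.TTheory GRing.Theory Num.Theory.
Import numFieldNormedType.Exports.
Local Open Scope ring_scope.

Section Defs.
Variable R : realType.

(* Given s = [:: E_0; ...; E_{m-1}] (evaluated at (A,x)), the value E_m
   for m >= 2 according to the parity rule. *)
Definition Estep (A x : R) (m : nat) (s : seq R) : R :=
  if ~~ odd m then
    expR ((x * (\sum_(j < m | odd j) s`_j) - m%:R / 2) * A)
  else
    expR (((m.+1)%:R / 2 - x * (\sum_(j < m | ~~ odd j) s`_j)) * A).

Fixpoint Es (A x : R) (n : nat) {struct n} : seq R :=
  match n with
  | 0 => [:: 1]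
  | 1 => [:: 1; expR ((1 - x) * A)]
  | (_.+1 as k).+1 => let s := Es A x k in rcons s (Estep A x k.+1 s)
  end.

Definition E (A x : R) (n : nat) : R := nth 0 (Es A x n) n.

(* phi_1 = x - 1, phi_n = phi_{n-1} - 1 + x E_{n-1}; phi 0 is a junk value. *)
Fixpoint phi (A x : R) (n : nat) {struct n} : R :=
  match n with
  | 0 => x - 1
  | 1 => x - 1
  | (_.+1 as k).+1 => phi A x k - 1 + x * E A x k
  end.

End Defs.

From HB Require Import structures.
From mathcomp Require Import all_boot all_order all_algebra.
From mathcomp Require Import all_classical all_reals all_analysis.
Import Order.TTheory GRing.Theory Num.Theory.
Import numFieldNormedType.Exports.
Local Open Scope ring_scope.

(* For m >= 1 both cases of the definition read E_m = exp((-1)^m (x S_m - ceil(m/2)) A),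
   where S_m sums the E_j, j < m, of parity opposite to m; there are ceil(m/2) such j.
   By strong induction E_m(A,1) = 1, hence d/dx E_m(A,1) = (-1)^m (ceil(m/2) + S'_m(1)) A
   is an integer polynomial in A, and p_n = n + sum_(j < n) d/dx E_j(A,1). *)

Lemma natr_uphalf (R : numFieldType) m : (uphalf m)%:R = (odd m + m)%:R / 2 :> R.
Proof. by rewrite -uphalfK -muln2 natrM mulfK ?pnatr_eq0. Qed.

Lemma sumr_parity_eq1 (R : pzSemiRingType) m b :
  \sum_(j < m | odd j == b) (1 : R) = (if b then m./2 else uphalf m)%:R.
Proof.
elim: m => [|m IHm]; first by rewrite big_ord0; case: b.
rewrite big_mkcond big_ord_recr -big_mkcond /= IHm uphalf_half /=.
by case: b {IHm}; case: (odd m); rewrite /= ?addr0 ?add0n ?add1n ?mulrSr.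
Qed.

Lemma sumr_parity_ne1 (R : pzSemiRingType) m :
  \sum_(j < m | odd j != odd m) (1 : R) = (uphalf m)%:R.
Proof.
rewrite (eq_bigl (fun j : 'I_m => odd j == ~~ odd m)); last first.
  by move=> j; case: (odd j); case: (odd m).
by rewrite sumr_parity_eq1 uphalf_half; case: (odd m).
Qed.

Lemma is_derive_sum_pred (R : numFieldType) (V W : normedModType R) n
    (P : pred 'I_n) (h : 'I_n -> V -> W) (x v : V) (dh : 'I_n -> W) :
  (forall i, P i -> is_derive x v (h i) (dh i)) ->
  is_derive x v (fun y => \sum_(i < n | P i) h i y) (\sum_(i < n | P i) dh i).
Proof.
move=> dhP; rewrite big_mkcond.
under eq_fun => y do rewrite big_mkcond.
rewrite -fct_sumE; apply: is_derive_sum => i.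
by case: ifP => [/dhP|_] //; exact: is_derive_cst.
Qed.

Definition dEnext m (s : seq {poly int}) : {poly int} :=
  (-1) ^+ m * ((uphalf m)%:R + \sum_(j < m | odd j != odd m) s`_j) * 'X.

Fixpoint dEpolys n : seq {poly int} :=
  if n is k.+1 then rcons (dEpolys k) (dEnext k.+1 (dEpolys k)) else [:: 0].

Definition dEpoly n := (dEpolys n)`_n.

Lemma size_dEpolys n : size (dEpolys n) = n.+1.
Proof. by elim: n => //= n IHn; rewrite size_rcons IHn. Qed.

Lemma nth_dEpolys n j : (j <= n)%N -> (dEpolys n)`_j = dEpoly j.
Proof.
elim: n => [|n IHn]; first by rewrite leqn0 => /eqP ->.
rewrite leq_eqVlt => /orP [/eqP -> //|ltjn] /=.
by rewrite nth_rcons size_dEpolys ltjn IHn.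
Qed.

Lemma dEpoly0 : dEpoly 0 = 0.
Proof. by []. Qed.

Lemma dEpolyS m : dEpoly m.+1 =
  (-1) ^+ m.+1 * ((uphalf m.+1)%:R + \sum_(j < m.+1 | odd j != odd m.+1) dEpoly j) * 'X.
Proof.
rewrite {1}/dEpoly /= nth_rcons size_dEpolys ltnn eqxx /dEnext.
by congr (_ * (_ + _) * _); apply: eq_bigr => j _; rewrite nth_dEpolys ?leq_ord.
Qed.

Definition dphi_poly n : {poly int} := n%:R + \sum_(j < n) dEpoly j.

Lemma dphi_polyS n : dphi_poly n.+1 = dphi_poly n + 1 + dEpoly n.
Proof. by rewrite /dphi_poly big_ord_recr mulrSr addrACA addrA. Qed.

Section ExponentialTower.
Variables (R : realType) (A : R).

Lemma size_Es x n : size (Es A x n) = n.+1.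
Proof. by elim: n => [|[|n] IHn] //=; rewrite size_rcons IHn. Qed.

Lemma EsSS x n : Es A x n.+2 = rcons (Es A x n.+1) (Estep A x n.+2 (Es A x n.+1)).
Proof. by []. Qed.

Lemma E_Estep x m : E A x m.+2 = Estep A x m.+2 (Es A x m.+1).
Proof. by rewrite /E EsSS nth_rcons size_Es ltnn eqxx. Qed.

Lemma Es_rcons x n : Es A x n.+1 = rcons (Es A x n) (E A x n.+1).
Proof. by case: n => // n; rewrite EsSS E_Estep. Qed.

Lemma nth_Es x n j : (j <= n)%N -> (Es A x n)`_j = E A x j.
Proof.
elim: n => [|n IHn]; first by rewrite leqn0 => /eqP ->.
rewrite leq_eqVlt => /orP [/eqP -> //|ltjn].
by rewrite Es_rcons nth_rcons size_Es ltjn IHn.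
Qed.

Lemma sum_nth_Es (P : pred nat) x m :
  \sum_(j < m.+1 | P j) (Es A x m)`_j = \sum_(j < m.+1 | P j) E A x j.
Proof. by apply: eq_bigr => j _; rewrite nth_Es ?leq_ord. Qed.

Lemma E_rec x m : (0 < m)%N ->
  E A x m = expR ((-1) ^+ m * (x * \sum_(j < m | odd j != odd m) E A x j
                                 - (uphalf m)%:R) * A).
Proof.
case: m => [|[|m]] // _.
  by rewrite /E /= big_mkcond big_ord1 /= mulr1 expr1 mulN1r opprB.
rewrite E_Estep /Estep.
rewrite natr_uphalf -signr_odd !oddS !negbK.
rewrite (sum_nth_Es odd) (sum_nth_Es (fun j => ~~ odd j)).
case: (odd m) => /=.
- under [in RHS]eq_bigl => j do rewrite eqb_id.
  by rewrite expr1 mulN1r opprB add1n.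
- under [in RHS]eq_bigl => j do rewrite eqbF_neg negbK.
  by rewrite expr0 mul1r add0n.
Qed.

Lemma E_at1 m : E A 1 m = 1.
Proof.
elim/ltn_ind: m => -[|m] IHm //.
rewrite E_rec //; under eq_bigr => j _ do rewrite IHm //.
by rewrite sumr_parity_ne1 mul1r subrr mulr0 mul0r expR0.
Qed.

Fact commr_intr_A : commr_rmorph intr A.
Proof. by move=> a; apply: mulrC. Qed.

(* ev P is convertibly (map_poly intr P).[A], packaged as a ring morphism. *)
Local Notation ev := (horner_morph commr_intr_A).

Lemma horner_dEpolyS m : ev (dEpoly m.+1) =
  (-1) ^+ m.+1 * ((uphalf m.+1)%:R + \sum_(j < m.+1 | odd j != odd m.+1) ev (dEpoly j)) * A.
Proof.
rewrite dEpolyS !rmorphM rmorphXn rmorphN1 rmorphD rmorph_nat rmorph_sum.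
by congr (_ * _); exact: horner_morphX.
Qed.

Lemma is_derive_E m : is_derive (1 : R) 1 (fun x => E A x m) (ev (dEpoly m)).
Proof.
elim/ltn_ind: m => -[|m] IHm.
  by rewrite dEpoly0 rmorph0; exact: is_derive_cst.
set S := fun x => \sum_(j < m.+1 | odd j != odd m.+1) E A x j.
have dS : is_derive (1 : R) 1 S (\sum_(j < m.+1 | odd j != odd m.+1) ev (dEpoly j)).
  by apply: is_derive_sum_pred => j _; exact: IHm.
have S1 : S 1 = (uphalf m.+1)%:R.
  by rewrite /S; under eq_bigr => j _ do rewrite E_at1; exact: sumr_parity_ne1.
set g := fun x => (-1) ^+ m.+1 * (x * S x - (uphalf m.+1)%:R) * A.
have dg : is_derive (1 : R) 1 g (ev (dEpoly m.+1)).
  apply: is_derive_eq.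
  by rewrite horner_dEpolyS S1 scaler0 add0r subr0 scale1r /GRing.scale /= mulr1 mulrC addrC.
have g1 : g 1 = 0 by rewrite /g mul1r S1 subrr mulr0 mul0r.
have -> : (fun x => E A x m.+1) = expR \o g by apply/funext => x; rewrite /= E_rec.
by have := is_derive1_comp (is_derive_expR (g 1)) dg; rewrite g1 expR0 mul1r.
Qed.

Lemma is_derive_phi n : (0 < n)%N ->
  is_derive (1 : R) 1 (fun x => phi A x n) (ev (dphi_poly n)).
Proof.
case: n => // n _; elim: n => [|n IHn].
  rewrite /dphi_poly big_ord1 dEpoly0 addr0 rmorph1.
  by apply: is_derive_eq; rewrite subr0.
have dE := is_derive_E n.+1.
apply: is_derive_eq.
rewrite subr0 scale1r E_at1 scale1r (dphi_polyS n.+1) [RHS]rmorphD [in RHS]rmorphD rmorph1.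
by rewrite addrA addrAC.
Qed.

End ExponentialTower.

Theorem lemma4p1 (R : realType) (n : nat) (hn : (1 <= n)%N) :
  exists P : {poly int},
    forall A : R, is_derive (1 : R) (1 : R) (fun x : R => phi A x n)
                            (map_poly intr P).[A].
Proof. by exists (dphi_poly n) => A; exact: is_derive_phi. Qed.
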